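(* For all integers $n\geq 1$ and $j\geq 0$, $$FO_{j,2}(n)=FD_{j,2}(n).$$
   Context: A partition is a finite nonincreasing sequence of positive integers (its parts); its size is the sum of its parts and is not fixed here. For a partition $\pi$, let $\alpha(\pi)$ be its largest part and $\lambda(\pi)$ its number of parts; the perimeter of $\pi$ is $\alpha(\pi)+\lambda(\pi)-1$ (the largest hook length of its Ferrers diagram). For a condition $*$, $r(n\mid * )$ denotes the number of partitions (of any size) with perimeter $n$ satisfying $*$. Define $FO_{j,2}(n)$ to be the number of partitions of perimeter $n$ having exactly $j$ distinct part sizes that are even (each such part may repeat), and $FD_{j,2}(n)$ to be the number of partitions of perimeter $n$ having exactly $j$ distinct part sizes that each appear at least $2$ times. *)

From mathcomp Require Import all_boot.
Set Implicit Arguments. Unset Strict Implicit. Unset Printing Implicit Defensive.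

Definition is_partition (s : seq nat) : bool :=
  sorted geq s && all (fun x => 0 < x) s.

Definition alpha (s : seq nat) : nat := \max_(x <- s) x.
Definition lambda (s : seq nat) : nat := size s.
Definition perimeter (s : seq nat) : nat := alpha s + lambda s - 1.

Definition num_even_part_sizes (s : seq nat) : nat :=
  count (fun x => ~~ odd x) (undup s).

Definition num_repeated_part_sizes (s : seq nat) : nat :=
  count (fun x => 2 <= count_mem x s) (undup s).

(* r(n | P): number of partitions (of any size) with perimeter n satisfying P.
   A partition of perimeter n >= 1 has at most n parts, each at most n, so
   the partitions of perimeter n are exactly the values of certain
   bounded sequences  s : n.-bseq 'I_n.+1  (the map s |-> map val s is
   injective); we count those. *)
Definition r (n : nat) (P : seq nat -> bool) : nat :=
  #|[set s : n.-bseq 'I_n.+1 |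
      let p := map val s in [&& is_partition p, perimeter p == n & P p]]|.

Definition FO2 (j n : nat) : nat := r n (fun p => num_even_part_sizes p == j).
Definition FD2 (j n : nat) : nat := r n (fun p => num_repeated_part_sizes p == j).

From mathcomp Require Import all_boot zify.

Set Implicit Arguments.
Unset Strict Implicit.
Unset Printing Implicit Defensive.

(* Every partition of perimeter n + 1 arises in exactly one way from a partition
   of perimeter n, either by appending a part 1 or by adding 1 to every part.
   Appending a 1 keeps the even part sizes, and creates a new repeated size
   exactly when 1 occurred once; adding 1 to every part swaps even and odd
   sizes and keeps the repeated ones.  Hence one proves by induction on n,
   simultaneously, that (number of even sizes) and (number of repeated sizes)
   are equidistributed, and that (number of odd sizes, 1 is a part) and
   (number of repeated sizes with a single 1 counted as repeated, 1 is a part)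
   are equidistributed: the second statement feeds the first after adding 1 to
   every part, and both are preserved by the two operations. *)

Lemma card_bseq_map_val (n m : nat) (Q : pred (seq nat)) (L : seq (seq nat)) :
  uniq L -> {subset Q <= L} ->
  {in L, forall p, (size p <= n) && all (fun x => x <= m) p} ->
  #|[set s : n.-bseq 'I_m.+1 | Q (map val s)]| = count Q L.
Proof.
move=> uniqL QL boundL.
pose f (s : n.-bseq 'I_m.+1) := map val (s : seq 'I_m.+1).
have inj_f : injective f by move=> s1 s2 /(inj_map val_inj) /val_inj.
rewrite cardE -(size_map f) -size_filter; apply/perm_size/uniq_perm.
- by rewrite (map_inj_uniq inj_f) enum_uniq.
- exact: filter_uniq.
move=> p; rewrite mem_filter; apply/mapP/andP => [[s] | [Qp pL]].
  by rewrite mem_enum inE => Qs ->; rewrite Qs QL.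
have /andP[size_p small_p] := boundL p pL.
have valK : map val (map (@inord m) p) = p.
  rewrite -map_comp; apply: map_id_in => x /(allP small_p) x_le /=.
  exact: inordK.
have size_p' : size (map (@inord m) p) <= n by rewrite size_map.
by exists (Bseq size_p'); rewrite /f ?mem_enum ?inE /= valK.
Qed.

Lemma perimeter_nil : perimeter [::] = 0.
Proof. by rewrite /perimeter /alpha big_nil. Qed.

Lemma alpha_cons x s : alpha (x :: s) = maxn x (alpha s).
Proof. exact: big_cons. Qed.

Lemma alpha_rcons s x : alpha (rcons s x) = maxn (alpha s) x.
Proof. exact: big_rcons. Qed.

Lemma alpha_map_succn s : s != [::] -> alpha (map succn s) = (alpha s).+1.
Proof.
elim: s => [|x [|y s] IH] _ //=; first by rewrite !alpha_cons /alpha !big_nil.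
by rewrite alpha_cons IH // alpha_cons maxnSS.
Qed.

Lemma part_le_alpha s x : x \in s -> x <= alpha s.
Proof. by move=> xs; rewrite /alpha (@leq_bigmax_seq _ s xpredT (fun y => y) x). Qed.

Lemma geq_trans : transitive geq.
Proof. by move=> y x z /= yx zy; apply: leq_trans yx. Qed.

Lemma is_partition_rcons1 q : is_partition (rcons q 1) = is_partition q.
Proof.
rewrite /is_partition !(sorted_pairwise geq_trans) -cats1 pairwise_cat allrel1r.
by rewrite all_cat /= !andbT; case: pairwise; case: all.
Qed.

Lemma is_partition_map_succn q : is_partition (map succn q) = sorted geq q.
Proof. by rewrite /is_partition sorted_map all_map (@eq_all _ _ predT) ?all_predT ?andbT. Qed.

Lemma perimeter_rcons1 q :
  is_partition q -> q != [::] -> perimeter (rcons q 1) = (perimeter q).+1.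
Proof.
case: q => [|x q] // /andP[_ /andP[x_gt0 _]] _.
have : x <= alpha (x :: q) by rewrite part_le_alpha ?mem_head.
rewrite /perimeter /lambda alpha_rcons size_rcons; lia.
Qed.

Lemma perimeter_map_succn q : q != [::] -> perimeter (map succn q) = (perimeter q).+1.
Proof.
by case: q => [|x q] // q_ne0; rewrite /perimeter /lambda alpha_map_succn //= size_map; lia.
Qed.

Lemma part_le_perimeter p x : x \in p -> x <= perimeter p.
Proof.
case: p => [|y p] // xp; have := part_le_alpha xp.
rewrite /perimeter /lambda /=; lia.
Qed.

Lemma size_le_perimeter p : is_partition p -> size p <= perimeter p.
Proof.
case: p => [|x p] // /andP[_ /= /andP[x_gt0 _]].
have : x <= alpha (x :: p) by rewrite part_le_alpha ?mem_head.
rewrite /perimeter /lambda /=; lia.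
Qed.

Lemma partition_mem1_rcons p : is_partition p -> 1 \in p -> exists q, p = rcons q 1.
Proof.
case/lastP: p => [|q x] // part_qx one_in; exists q; suff -> : x = 1 by [].
move: part_qx one_in; rewrite /is_partition (sorted_pairwise geq_trans) -cats1.
rewrite pairwise_cat allrel1r all_cat /= => /and4P[/andP[ge_x _] _ x_gt0 _].
rewrite mem_cat inE => one_in; apply/eqP; rewrite eqn_leq x_gt0 andbT.
by case/orP: one_in => [/(allP ge_x)|/eqP ->].
Qed.

Lemma partition_notin1_map_succn p :
  is_partition p -> 1 \notin p -> exists2 q, p = map succn q & is_partition q.
Proof.
case/andP=> sorted_p pos_p one_notin; exists (map predn p).
  rewrite -map_comp map_id_in // => x xp /=; rewrite prednK //; exact: (allP pos_p).
have parts_gt1 x : x \in p -> 1 < x.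
  move=> xp; rewrite ltn_neqAle (allP pos_p x xp) andbT.
  by apply: contraNneq one_notin => ->.
apply/andP; split.
  apply: (homo_sorted_in _ pos_p sorted_p) => x y _ _ /=.
  by rewrite -!subn1; apply: leq_sub2r.
by rewrite all_map; apply/allP => x /parts_gt1 /=; case: x.
Qed.

Fixpoint perimeter_partitions (n : nat) : seq (seq nat) :=
  match n with
  | 0 => [::]
  | 1 => [:: [:: 1]]
  | m.+1 => [seq rcons p 1 | p <- perimeter_partitions m] ++
            [seq map succn p | p <- perimeter_partitions m]
  end.

Lemma perimeter_partitionsSS n :
  perimeter_partitions n.+2 =
  [seq rcons p 1 | p <- perimeter_partitions n.+1] ++
  [seq map succn p | p <- perimeter_partitions n.+1].
Proof. by []. Qed.

Lemma perimeter1_partition p : is_partition p -> perimeter p = 1 -> p = [:: 1].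
Proof.
move=> part_p per_p; have := size_le_perimeter part_p; rewrite per_p.
case: p part_p per_p => [|x [|y p]] //; first by rewrite perimeter_nil.
by rewrite /perimeter /lambda alpha_cons /alpha big_nil maxn0 addnK => _ ->.
Qed.

Lemma mem_perimeter_partitions n p : 0 < n ->
  (p \in perimeter_partitions n) = is_partition p && (perimeter p == n).
Proof.
elim: n p => [|[|n] IH] p // _.
  rewrite inE; apply/eqP/andP => [-> | [part_p /eqP]]; last exact: perimeter1_partition.
  by rewrite /perimeter /lambda alpha_cons /alpha big_nil.
have partitionsP q : q \in perimeter_partitions n.+1 ->
    [/\ is_partition q, perimeter q = n.+1 & q != [::]].
  rewrite IH // => /andP[part_q /eqP per_q]; split=> //.
  by apply: contra_eq_neq per_q => ->; rewrite perimeter_nil.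
rewrite perimeter_partitionsSS mem_cat; apply/orP/andP => [[]|[part_p /eqP per_p]].
- case/mapP=> q /partitionsP[part_q per_q q_ne0] ->.
  by rewrite is_partition_rcons1 perimeter_rcons1 ?per_q.
- case/mapP=> q /partitionsP[part_q per_q q_ne0] ->.
  by rewrite is_partition_map_succn perimeter_map_succn ?per_q //; case/andP: part_q.
have p_ne0 : p != [::] by apply: contra_eq_neq per_p => ->; rewrite perimeter_nil.
case: (boolP (1 \in p)) => [one_in | one_notin].
  have [q def_p] := partition_mem1_rcons part_p one_in.
  have q_ne0 : q != [::].
    by apply: contra_eq_neq per_p; rewrite def_p => ->; rewrite /perimeter /alpha big_cons big_nil.
  left; apply/mapP; exists q => //.
  move: part_p per_p; rewrite def_p is_partition_rcons1 => part_q.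
  by rewrite IH // part_q perimeter_rcons1 // => /succn_inj/eqP.
have [q def_p part_q] := partition_notin1_map_succn part_p one_notin.
have q_ne0 : q != [::] by apply: contraNneq p_ne0; rewrite def_p => ->.
right; apply/mapP; exists q => //; move: per_p.
by rewrite IH // part_q def_p perimeter_map_succn // => /succn_inj/eqP.
Qed.

Lemma perimeter_partitions_uniq n : uniq (perimeter_partitions n).
Proof.
elim: n => [|[|n] IH] //; rewrite perimeter_partitionsSS cat_uniq.
rewrite (map_inj_uniq (@rcons_injl _ 1)) (map_inj_uniq (inj_map succn_inj)) IH andbT andTb.
apply/hasPn => _ /mapP[q q_in ->]; apply/negP => /mapP[q' _ /(congr1 (fun s => 1 \in s))].
rewrite mem_rcons mem_head (mem_map succn_inj _ 0) => zero_in.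
by move: q_in; rewrite mem_perimeter_partitions // => /andP[/andP[_ /allP/(_ 0 zero_in)]].
Qed.

Lemma r_perimeter_partitions n (P : pred (seq nat)) :
  0 < n -> r n P = count P (perimeter_partitions n).
Proof.
move=> n_gt0; pose Q p := [&& is_partition p, perimeter p == n & P p].
have -> : count P (perimeter_partitions n) = count Q (perimeter_partitions n).
  by apply: eq_in_count => p; rewrite mem_perimeter_partitions // /Q => /andP[-> ->].
apply: card_bseq_map_val (perimeter_partitions_uniq n) _ _ => p.
  by case/and3P=> part_p per_p _; rewrite mem_perimeter_partitions // part_p per_p.
rewrite mem_perimeter_partitions // => /andP[part_p /eqP <-].
by rewrite size_le_perimeter //=; apply/allP => x /part_le_perimeter.
Qed.

Definition num_odd_part_sizes (s : seq nat) : nat := count odd (undup s).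

Lemma perm_count_part_sizes (a : nat -> nat -> bool) s t : perm_eq s t ->
  count (fun x => a x (count_mem x s)) (undup s) =
  count (fun x => a x (count_mem x t)) (undup t).
Proof.
move=> st; rewrite (permP (perm_undup (perm_mem st))).
by apply: eq_count => x; rewrite (permP st).
Qed.

Lemma num_even_part_sizes_rcons s x :
  num_even_part_sizes (rcons s x) = num_even_part_sizes s + (~~ odd x && (x \notin s)).
Proof.
rewrite /num_even_part_sizes.
rewrite (perm_count_part_sizes (fun y _ => ~~ odd y) (permEl (perm_rcons x s))).
by rewrite /=; case: ifP => _; rewrite ?andbF ?andbT ?addn0 // addnC.
Qed.

Lemma num_odd_part_sizes_rcons s x :
  num_odd_part_sizes (rcons s x) = num_odd_part_sizes s + (odd x && (x \notin s)).
Proof.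
rewrite /num_odd_part_sizes.
rewrite (perm_count_part_sizes (fun y _ => odd y) (permEl (perm_rcons x s))).
by rewrite /=; case: ifP => _; rewrite ?andbF ?andbT ?addn0 // addnC.
Qed.

Lemma num_repeated_part_sizes_rcons s x :
  num_repeated_part_sizes (rcons s x) = num_repeated_part_sizes s + (count_mem x s == 1).
Proof.
rewrite /num_repeated_part_sizes.
rewrite (perm_count_part_sizes (fun _ c => 2 <= c) (permEl (perm_rcons x s))) /=.
have off_x u : x \notin u ->
    count (fun y => 2 <= (x == y) + count_mem y s) u = count (fun y => 2 <= count_mem y s) u.
  move=> x_notin; apply: eq_in_count => y y_in.
  by rewrite (_ : x == y = false) //; apply: contraNF x_notin => /eqP ->.
case: ifP => [xs | /negbT xs]; last first.
  by rewrite /= eqxx (count_memPn xs) off_x ?mem_undup //= addn0.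
have xu : x \in undup s by rewrite mem_undup.
rewrite !(permP (perm_to_rem xu)) /= eqxx off_x ?mem_rem_uniqF ?undup_uniq //.
have := xs; rewrite -has_pred1 has_count.
by case: (count_mem x s) => [|[|c]] //= _; rewrite addnAC.
Qed.

Lemma num_even_part_sizes_map_succn s :
  num_even_part_sizes (map succn s) = num_odd_part_sizes s.
Proof.
rewrite /num_even_part_sizes undup_map_inj ?count_map; last exact: succn_inj.
by apply: eq_count => x /=; rewrite negbK.
Qed.

Lemma num_odd_part_sizes_map_succn s :
  num_odd_part_sizes (map succn s) = num_even_part_sizes s.
Proof. by rewrite /num_odd_part_sizes undup_map_inj ?count_map //; apply: succn_inj. Qed.

Lemma num_repeated_part_sizes_map_inj f s : injective f ->
  num_repeated_part_sizes (map f s) = num_repeated_part_sizes s.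
Proof.
move=> inj_f; rewrite /num_repeated_part_sizes undup_map_inj // count_map.
by apply: eq_count => x /=; rewrite count_map (eq_count (a2 := pred1 x)) // => y /=; rewrite inj_eq.
Qed.

Definition odd_profile (p : seq nat) : nat * bool := (num_odd_part_sizes p, 1 \in p).

(* A single part 1 counts as repeated: appending another 1 makes it so. *)
Definition repeated_profile (p : seq nat) : nat * bool :=
  (num_repeated_part_sizes p + (count_mem 1 p == 1), 1 \in p).

Definition append1_profile (a : nat * bool) : nat * bool := (a.1 + ~~ a.2, true).

Lemma num_even_part_sizes_rcons1 p :
  num_even_part_sizes (rcons p 1) = num_even_part_sizes p.
Proof. by rewrite num_even_part_sizes_rcons addn0. Qed.

Lemma num_repeated_part_sizes_rcons1 p :
  num_repeated_part_sizes (rcons p 1) = (repeated_profile p).1.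
Proof. exact: num_repeated_part_sizes_rcons. Qed.

Lemma odd_profile_rcons1 p : odd_profile (rcons p 1) = append1_profile (odd_profile p).
Proof. by rewrite /odd_profile num_odd_part_sizes_rcons mem_rcons mem_head. Qed.

Lemma repeated_profile_rcons1 p :
  repeated_profile (rcons p 1) = append1_profile (repeated_profile p).
Proof.
rewrite /repeated_profile num_repeated_part_sizes_rcons mem_rcons mem_head /=.
by rewrite -cats1 count_cat /= addn1 eqSS eqn0Ngt -has_count has_pred1.
Qed.

Lemma odd_profile_map_succn p :
  0 \notin p -> odd_profile (map succn p) = (num_even_part_sizes p, false).
Proof.
by move=> p0; rewrite /odd_profile num_odd_part_sizes_map_succn (mem_map succn_inj _ 0) (negbTE p0).
Qed.

Lemma repeated_profile_map_succn p :
  0 \notin p -> repeated_profile (map succn p) = (num_repeated_part_sizes p, false).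
Proof.
move=> p0; have one_notin : 1 \notin map succn p by rewrite (mem_map succn_inj _ 0).
rewrite /repeated_profile num_repeated_part_sizes_map_inj; last exact: succn_inj.
by rewrite (count_memPn one_notin) addn0 (negbTE one_notin).
Qed.

Lemma partition_notin0 p : is_partition p -> 0 \notin p.
Proof. by case/andP=> _ /allP pos_p; apply/negP => /pos_p. Qed.

Lemma perimeter_partitions_equidistributed n : 0 < n ->
  perm_eq [seq num_even_part_sizes p | p <- perimeter_partitions n]
          [seq num_repeated_part_sizes p | p <- perimeter_partitions n] /\
  perm_eq [seq odd_profile p | p <- perimeter_partitions n]
          [seq repeated_profile p | p <- perimeter_partitions n].
Proof.
elim: n => [|[|n] IH] // _.
have [IH_even IH_odd] := IH isT; set L := perimeter_partitions n.+1.
have notin0 : {in L, forall p, 0 \notin p}.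
  by move=> p; rewrite mem_perimeter_partitions // => /andP[/partition_notin0].
rewrite perimeter_partitionsSS !map_cat -!map_comp.
rewrite (eq_map num_even_part_sizes_rcons1) (eq_map num_repeated_part_sizes_rcons1).
rewrite (eq_map odd_profile_rcons1) (eq_map repeated_profile_rcons1).
rewrite (eq_map num_even_part_sizes_map_succn).
rewrite (eq_map (fun p => num_repeated_part_sizes_map_inj p succn_inj)).
have odd_succn : {in L, forall p, odd_profile (map succn p) = (num_even_part_sizes p, false)}.
  by move=> p /notin0/odd_profile_map_succn.
have repeated_succn :
    {in L, forall p, repeated_profile (map succn p) = (num_repeated_part_sizes p, false)}.
  by move=> p /notin0/repeated_profile_map_succn.
rewrite ((eq_in_map _ _ _).1 odd_succn) ((eq_in_map _ _ _).1 repeated_succn).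
split; last first.
  apply: perm_cat; last by move: (perm_map (pair^~ false) IH_even); rewrite -!map_comp.
  by move: (perm_map append1_profile IH_odd); rewrite -!map_comp.
rewrite perm_catC; apply: perm_cat _ IH_even.
by move: (perm_map fst IH_odd); rewrite -!map_comp.
Qed.

Theorem theorem1p1 (n j : nat) : 1 <= n -> FO2 j n = FD2 j n.
Proof.
move=> n_gt0; rewrite /FO2 /FD2 !r_perimeter_partitions //.
have [even_repeated _] := perimeter_partitions_equidistributed n_gt0.
by have := permP even_repeated (pred1 j); rewrite !count_map.
Qed.
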